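(* Let $n\ge 2$, let $\mathcal{L}\subset\mathbb{R}^n$ be a tame lattice with Lagrangian basis $\{\mathbf{e}_1,\dots,\mathbf{e}_n\}$, $\mathbf{v}_1=\sum_i\mathbf{e}_i$, $a:=\langle\mathbf{e}_1,\mathbf{e}_1\rangle$, $h:=-\langle\mathbf{e}_1,\mathbf{e}_2\rangle$. Let $r,s$ be integers with $0\ne|r|<n$, $m=r+sn$, and suppose $$\frac{na-1}{n^2-1}\le\left(\frac{m}{r}\right)^2\le\frac{(na-1)(n+1)}{n-1}.$$ Then $$\frac{1}{2^n}\le\delta(\mathcal{L}_{\mathbf{v}_1}^{(r,s)})\le\frac{1}{2^{n/2}\sqrt{n+1}},$$ i.e. $\delta(\mathbb{Z}^n)\le\delta(\mathcal{L}_{\mathbf{v}_1}^{(r,s)})\le\delta(A_n)$. The lower bound is attained when $(m/r)^2=\frac{na-1}{n-1}$ and the upper bound is attained when $(m/r)^2=\frac{(na-1)(n+1)}{n-1}$.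
   Context: Tame lattice: a full-rank lattice $\mathcal{L}\subset\mathbb{R}^n$ with a basis $\{\mathbf{e}_1,\dots,\mathbf{e}_n\}$ (Lagrangian basis) and nonzero $\mathbf{v}_1\in\mathcal{L}\cap\mathcal{L}^*$ such that $\sum_i\mathbf{e}_i=\mathbf{v}_1$, $\langle\mathbf{e}_i,\mathbf{v}_1\rangle=1$, $\langle\mathbf{e}_i,\mathbf{e}_i\rangle=a$, $\langle\mathbf{e}_i,\mathbf{e}_j\rangle=-h$ ($i\ne j$); then $a-h(n-1)=1$. $\mathcal{L}^{(r,s)}_{\mathbf{v}_1}$ is the image of $\mathcal{L}$ under $\mathbf{x}\mapsto r\mathbf{x}+s\langle\mathbf{x},\mathbf{v}_1\rangle\mathbf{v}_1$. Center density: $\delta(\Lambda)=\lambda_1(\Lambda)^n/(2^n\operatorname{vol}(\Lambda))$. $A_n=\{\mathbf{x}\in\mathbb{Z}^{n+1}:\sum_i x_i=0\}$, a rank-$n$ lattice with $\delta(A_n)=2^{-n/2}(n+1)^{-1/2}$; $\delta(\mathbb{Z}^n)=2^{-n}$. *)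

From HB Require Import structures.
From mathcomp Require Import all_boot all_order all_algebra.
From mathcomp Require Import classical_sets reals.
Set Implicit Arguments. Unset Strict Implicit. Unset Printing Implicit Defensive.
Import Order.TTheory GRing.Theory Num.Theory.
Local Open Scope ring_scope.
Local Open Scope classical_set_scope.

Section Lattices.
Variables (R : realType) (n : nat).

(* Vectors of R^n are row vectors 'rV[R]_n; a basis is given by the rows of
   a matrix B : 'M[R]_n. *)
Definition dotv (x y : 'rV[R]_n) : R := \sum_(i < n) x 0 i * y 0 i.
Definition norm2 (x : 'rV[R]_n) : R := Num.sqrt (dotv x x).

Definition lattice (B : 'M[R]_n) : set 'rV[R]_n :=
  [set x | exists z : 'I_n -> int, x = \sum_(i < n) (z i)%:~R *: row i B].

Definition dual (L : set 'rV[R]_n) : set 'rV[R]_n :=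
  [set y | forall x, L x -> exists k : int, dotv x y = k%:~R].

Definition lambda1 (B : 'M[R]_n) : R :=
  inf [set norm2 x | x in lattice B `\ 0].

Definition covol (B : 'M[R]_n) : R := `|\det B|.

Definition center_density (B : 'M[R]_n) : R :=
  lambda1 B ^+ n / (2 ^+ n * covol B).

Definition vsum (E : 'M[R]_n) : 'rV[R]_n := \sum_(i < n) row i E.

Definition tame_basis (E : 'M[R]_n) (a h : R) : Prop :=
  [/\ E \in unitmx /\ vsum E != 0,
      (lattice E (vsum E) /\ dual (lattice E) (vsum E)),
      (forall i : 'I_n, dotv (row i E) (vsum E) = 1),
      (forall i : 'I_n, dotv (row i E) (row i E) = a) &
      (forall i j : 'I_n, i != j -> dotv (row i E) (row j E) = - h)].

(* The linear map x |-> r x + s <x,v1> v1, acting on row vectors by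
   right multiplication. *)
Definition transf (r s : int) (v1 : 'rV[R]_n) : 'M[R]_n :=
  (r%:~R)%:M + (s%:~R) *: (v1^T *m v1).

(* A basis of L^{(r,s)}_{v1}: the images of the basis vectors of L. *)
Definition image_basis (E : 'M[R]_n) (r s : int) : 'M[R]_n :=
  E *m transf r s (vsum E).

End Lattices.

From HB Require Import structures.
From mathcomp Require Import all_boot all_order all_algebra.
From mathcomp Require Import classical_sets reals.
From mathcomp Require Import ring lra zify.
Set Implicit Arguments. Unset Strict Implicit. Unset Printing Implicit Defensive.
Import Order.TTheory GRing.Theory Num.Theory.
Local Open Scope ring_scope.

(* The image basis has Gram matrix c I + d J with c = r^2 (a + h) and
   c + n d = m^2, and the hypothesis on (m/r)^2 says exactly that
   -c/(n+1) <= d <= c.  For such a Gram matrix no integer combination of the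
   basis vectors is shorter than a basis vector, so lambda1^2 = c + d, while
   det(c I + d J) = c^n (1 + n u) with u = d/c.  Hence
   (2^n delta)^2 = (1 + u)^n / (1 + n u): the lower bound is Bernoulli's
   inequality (equality at u = 0), and the upper bound is
   (n + 1) (1 + u)^n <= 2^n (1 + n u) on [-1/(n+1), 1], where the convex
   left side lies below its chord (equality at u = 1). *)

Section DotProduct.
Variables (R : realType) (n : nat).
Implicit Types (x y z : 'rV[R]_n) (c : R).

Lemma dotvC x y : dotv x y = dotv y x.
Proof. by rewrite /dotv; apply: eq_bigr => i _; rewrite mulrC. Qed.

Lemma dotvDl x y z : dotv (x + y) z = dotv x z + dotv y z.
Proof. by rewrite /dotv -big_split; apply: eq_bigr => i _; rewrite !mxE mulrDl. Qed.

Lemma dotvZl c x z : dotv (c *: x) z = c * dotv x z.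
Proof. by rewrite /dotv big_distrr; apply: eq_bigr => i _; rewrite !mxE -mulrA. Qed.

Lemma dotvDr x y z : dotv z (x + y) = dotv z x + dotv z y.
Proof. by rewrite !(dotvC z) dotvDl. Qed.

Lemma dotvZr c x z : dotv z (c *: x) = c * dotv z x.
Proof. by rewrite !(dotvC z) dotvZl. Qed.

Lemma dotvBl x y z : dotv (x - y) z = dotv x z - dotv y z.
Proof. by rewrite dotvDl -scaleN1r dotvZl mulN1r. Qed.

Lemma dotvBr x y z : dotv z (x - y) = dotv z x - dotv z y.
Proof. by rewrite !(dotvC z) dotvBl. Qed.

Lemma dotv_suml (I : finType) (X : I -> 'rV[R]_n) z :
  dotv (\sum_i X i) z = \sum_i dotv (X i) z.
Proof.
rewrite /dotv exchange_big /=; apply: eq_bigr => k _.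
by rewrite summxE big_distrl.
Qed.

Lemma dotv_sumZ (I J : finType) (f : I -> R) (g : J -> R)
    (X : I -> 'rV[R]_n) (Y : J -> 'rV[R]_n) :
  dotv (\sum_i f i *: X i) (\sum_j g j *: Y j) =
  \sum_i \sum_j f i * g j * dotv (X i) (Y j).
Proof.
rewrite dotv_suml; apply: eq_bigr => i _.
rewrite dotvZl dotvC dotv_suml big_distrr /=; apply: eq_bigr => j _.
by rewrite dotvZl dotvC mulrA mulrAC.
Qed.

Lemma dotv_ge0 x : 0 <= dotv x x.
Proof. by rewrite /dotv; apply: sumr_ge0 => i _; rewrite -expr2 sqr_ge0. Qed.

Lemma dotv_gt0 x : x != 0 -> 0 < dotv x x.
Proof.
move=> xn0; rewrite lt_neqAle dotv_ge0 andbT.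
apply: contra xn0 => /eqP x0; apply/eqP/rowP => k; rewrite mxE.
have : \sum_(i < n) x 0 i * x 0 i == 0 by rewrite -[X in X == _]/(dotv x x) x0.
rewrite psumr_eq0 => [/allP/(_ k (mem_index_enum _))|i _].
  by rewrite implyTb mulf_eq0 orbb => /eqP.
by rewrite -expr2 sqr_ge0.
Qed.

End DotProduct.

Lemma det1D_rank1 (R : fieldType) (n : nat) (u : 'cV[R]_n) (w : 'rV[R]_n) :
  \det (1%:M + u *m w) = 1 + (w *m u) 0 0.
Proof.
pose M := block_mx (1%:M : 'M[R]_n) (- u) w (1%:M : 'M[R]_1).
have eM1 : M = block_mx 1%:M 0 w 1%:M *m block_mx 1%:M (- u) 0 (1%:M + w *m u).
  rewrite mulmx_block; congr block_mx;
    rewrite ?mul1mx ?mul0mx ?mulmx0 ?mulmx1 ?addr0 ?add0r //.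
  by rewrite mulmxN addrCA addNr addr0.
have eM2 : M = block_mx (1%:M + u *m w) (- u) 0 1%:M *m block_mx 1%:M 0 w 1%:M.
  rewrite mulmx_block; congr block_mx;
    rewrite ?mul1mx ?mul0mx ?mulmx0 ?mulmx1 ?addr0 ?add0r //.
  by rewrite mulNmx addrK.
have := congr1 determinant (etrans (esym eM2) eM1).
rewrite !det_mulmx ?det_lblock ?det_ublock !det1 ?mul1r ?mulr1 => ->.
by rewrite det_mx11 !mxE eqxx.
Qed.

Section UniformGram.
Variables (R : realType) (n : nat).

Definition uniform_gram (B : 'M[R]_n) (c d : R) : Prop :=
  forall i j, dotv (row i B) (row j B) = c * (i == j)%:R + d.

Variables (B : 'M[R]_n) (c d : R).
Hypothesis gramB : uniform_gram B c d.

Lemma dotv_row_sum_uniform_gram i :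
  dotv (row i B) (\sum_j row j B) = c + n%:R * d.
Proof.
rewrite dotvC dotv_suml; under eq_bigr do rewrite dotvC gramB.
rewrite big_split /= -big_distrr /= sumr_const card_ord mulr_natl.
by rewrite (bigD1 i) //= eqxx big1 ?addr0 ?mulr1 // => j; rewrite eq_sym => /negbTE ->.
Qed.

Lemma uniform_gram_gt0 : B \in unitmx -> (2 <= n)%N -> 0 < c.
Proof.
move=> Bu n2; pose i0 : 'I_n := Ordinal (ltnW n2); pose i1 : 'I_n := Ordinal n2.
have ne : i0 != i1 by [].
have : row i0 B - row i1 B != 0.
  apply/negP => /eqP /subr0_eq eqr.
  move: Bu; rewrite unitmxE (determinant_alternate ne) ?unitr0 // => k.
  by have := congr1 (fun M : 'rV[R]_n => M 0 k) eqr; rewrite !mxE.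
move/dotv_gt0; rewrite dotvBl !dotvBr !gramB eqxx (negbTE ne) eq_sym (negbTE ne).
by rewrite mulr1 mulr0; lra.
Qed.

Lemma det_uniform_gram : c != 0 -> \det B ^+ 2 = c ^+ n * (1 + n%:R * (d / c)).
Proof.
move=> c0.
have -> : \det B ^+ 2 = \det (B *m B^T) by rewrite det_mulmx det_tr expr2.
have -> : B *m B^T =
    c *: (1%:M + (const_mx (d / c) : 'cV[R]_n) *m (const_mx 1 : 'rV[R]_n)).
  apply/matrixP => i j; rewrite !mxE.
  have -> : \sum_k B i k * B^T k j = dotv (row i B) (row j B).
    by rewrite /dotv; apply: eq_bigr => k _; rewrite !mxE.
  rewrite gramB big_ord1 !mxE mulr1 mulrDr mulrCA divff // mulr1.
  by rewrite -mulr_natr.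
rewrite detZ det1D_rank1; congr (_ * (1 + _)).
rewrite !mxE (eq_bigr (fun _ => d / c)) ?sumr_const ?card_ord ?mulr_natl //.
by move=> k _; rewrite !mxE mul1r.
Qed.

Lemma dotv_comb_uniform_gram (z : 'I_n -> R) :
  dotv (\sum_i z i *: row i B) (\sum_i z i *: row i B) =
  c * (\sum_i z i ^+ 2) + d * (\sum_i z i) ^+ 2.
Proof.
rewrite dotv_sumZ.
under eq_bigr do under eq_bigr do rewrite gramB mulrDr.
under eq_bigr do rewrite big_split /=.
rewrite big_split /=; congr (_ + _).
  rewrite big_distrr /=; apply: eq_bigr => i _.
  rewrite (bigD1 i) //= eqxx big1 ?addr0; first by rewrite mulr1 expr2; ring.
  by move=> j /negbTE; rewrite eq_sym => ->; rewrite !mulr0.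
rewrite expr2 big_distrl /= big_distrr /=; apply: eq_bigr => i _.
rewrite big_distrr /= big_distrr /=; apply: eq_bigr => j _; ring.
Qed.

End UniformGram.

Lemma sqr_sum_le_card_sum_sqr (R : realDomainType) (n : nat) (z : 'I_n -> R) :
  (\sum_i z i) ^+ 2 <= n%:R * \sum_i z i ^+ 2.
Proof.
set S := \sum_i z i ^+ 2; set k := \sum_i z i.
have e : \sum_i \sum_j (z i - z j) ^+ 2 = 2 * (n%:R * S - k ^+ 2).
  rewrite (eq_bigr (fun i => n%:R * z i ^+ 2 + S - 2 * (z i * k))).
    rewrite sumrB big_split /= -!big_distrr /= sumr_const card_ord.
    by rewrite -/S -/k -big_distrl /= -/k -mulr_natl; ring.
  move=> i _.
  rewrite (eq_bigr (fun j => z i ^+ 2 + z j ^+ 2 - 2 * (z i * z j))); last first.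
    by move=> j _; ring.
  rewrite sumrB big_split /= sumr_const card_ord -big_distrr /= -big_distrr /=.
  rewrite -/S -/k.
  by rewrite [n%:R * _]mulr_natl.
have : 0 <= \sum_i \sum_j (z i - z j) ^+ 2.
  by apply: sumr_ge0 => i _; apply: sumr_ge0 => j _; apply: sqr_ge0.
by rewrite e pmulr_rge0 // subr_ge0.
Qed.

Section IntegerVectors.
Variables (n : nat) (z : 'I_n -> int).

Lemma sum_norm_le_sum_sqr : \sum_i `|z i| <= \sum_i z i ^+ 2.
Proof. by apply: ler_sum => i _; rewrite expr2; nia. Qed.

Lemma norm_sum_le_sum_sqr : `|\sum_i z i| <= \sum_i z i ^+ 2.
Proof. exact: le_trans (ler_norm_sum _ _ _) sum_norm_le_sum_sqr. Qed.

Variable i0 : 'I_n.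
Hypothesis zi0 : z i0 != 0.

Lemma sum_sqr_ge1 : 1 <= \sum_i z i ^+ 2.
Proof.
rewrite (bigD1 i0) //= -[1]addr0; apply: lerD; first by rewrite expr2; lia.
by apply: sumr_ge0 => i _; apply: sqr_ge0.
Qed.

(* The other entries sum to [- z i0], so [sum |z i| >= 2 |z i0| >= 2]. *)
Lemma sum_sqr_ge2 : \sum_i z i = 0 -> 2 <= \sum_i z i ^+ 2.
Proof.
rewrite (bigD1 i0) //= => /eqP; rewrite addr_eq0 => /eqP rest.
apply: le_trans sum_norm_le_sum_sqr; rewrite (bigD1 i0) //=.
have : `|\sum_(i < n | i != i0) z i| <= \sum_(i < n | i != i0) `|z i|.
  exact: ler_norm_sum.
rewrite -normrN -rest.
have z1 : 1 <= `|z i0| by rewrite -[1]add0r lezD1 normr_gt0.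
by move=> h; apply: (lerD z1 (le_trans z1 h)).
Qed.

End IntegerVectors.

(* [S] and [K] stand for [\sum_i z_i^2] and [|\sum_i z_i|], [z] a nonzero
   integer vector.  The cases are [K = 0] (then [S >= 2]), [d >= 0],
   [d < 0] with [1 <= K <= N], and [d < 0] with [K >= N + 1]; the last one
   needs [K^2 <= N S]. *)
Lemma uniform_form_lb_large (R : realFieldType) (N c d S K : R) :
  1 <= N -> 0 < c -> 0 <= c + (N + 1) * d -> d < 0 -> N + 1 <= K ->
  K ^+ 2 <= N * S -> c + d <= c * S + d * K ^+ 2.
Proof.
move=> N1 c0 hd1 d0 KN KNS.
have cNd : 0 <= c + N * d by nra.
have cKS : c * K ^+ 2 <= c * N * S by rewrite -mulrA ler_pM2l.
have KK : (N + 1) ^+ 2 <= K ^+ 2 by rewrite lerXn2r // ?nnegrE; lra.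
have h3 : (N + 1) ^+ 2 * (c + N * d) <= K ^+ 2 * (c + N * d) by rewrite ler_wpM2r.
(* [(N+1) ((N+1)^2 (c+Nd) - N (c+d)) = c (2N+1) + N^2 (N+2) (c+(N+1)d)] *)
have h4 : N * (c + d) <= (N + 1) ^+ 2 * (c + N * d).
  have : 0 <= N ^+ 2 * (N + 2) * (c + (N + 1) * d).
    by apply: mulr_ge0 => //; apply: mulr_ge0; [apply: sqr_ge0 | lra].
  nra.
have : N * (c + d) <= N * (c * S + d * K ^+ 2) by nra.
by rewrite ler_pM2l; lra.
Qed.

Lemma uniform_form_lb (R : realFieldType) (N c d S K : R) :
  1 <= N -> 0 < c -> 0 <= c + (N + 1) * d -> d <= c ->
  1 <= S -> K <= S -> 0 <= K -> K ^+ 2 <= N * S -> (K = 0 -> 2 <= S) ->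
  (K = 0 \/ 1 <= K) -> (K <= N \/ N + 1 <= K) ->
  c + d <= c * S + d * K ^+ 2.
Proof.
move=> N1 c0 hd1 hd2 S1 KS K0 KNS K0S [K00|K1] KN.
  have S2 := K0S K00; rewrite K00 expr2 mul0r mulr0 addr0.
  have : 0 <= c * (S - 2) by apply: mulr_ge0; lra.
  lra.
have [d0|d0] := lerP 0 d.
  have : 0 <= d * (K ^+ 2 - 1) by apply: mulr_ge0 => //; rewrite subr_ge0; nra.
  nra.
case: KN => [KN|KN]; last exact: uniform_form_lb_large N1 c0 hd1 d0 KN KNS.
have : 0 <= c + d * (K + 1) by nra.
nra.
Qed.

Lemma uniform_form_int_lb (R : realFieldType) (n : nat) (c d : R) (z : 'I_n -> int)
    (i0 : 'I_n) :
  0 < c -> 0 <= c + (n%:R + 1) * d -> d <= c -> z i0 != 0 ->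
  c + d <= c * (\sum_i (z i)%:~R ^+ 2) + d * (\sum_i (z i)%:~R) ^+ 2.
Proof.
move=> c0 hd1 hd2 zi0.
have N1 : 1 <= (n%:R : R) by rewrite ler1n (leq_ltn_trans (leq0n i0)).
set S := \sum_i z i ^+ 2; set k := \sum_i z i.
have -> : \sum_i (z i)%:~R ^+ 2 = (S%:~R : R).
  by rewrite rmorph_sum; apply: eq_bigr => i _; rewrite rmorphXn.
have -> : \sum_i (z i)%:~R = (k%:~R : R) by rewrite rmorph_sum.
have -> : (k%:~R : R) ^+ 2 = ((`|k| : int)%:~R) ^+ 2.
  by rewrite -!rmorphXn /=; congr (_ %:~R); rewrite !expr2; nia.
apply: (uniform_form_lb N1) => //.
- by rewrite ler1z (sum_sqr_ge1 zi0).
- by rewrite ler_int norm_sum_le_sum_sqr.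
- rewrite -rmorphXn /= -[n%:R]/((n%:Z)%:~R) -intrM ler_int.
  have := sqr_sum_le_card_sum_sqr z; rewrite -/k -/S natz.
  by rewrite !expr2; nia.
- move=> /eqP; rewrite intr_eq0 normr_eq0 => /eqP /(sum_sqr_ge2 zi0) S2.
  by rewrite (_ : 2 = (2 : int)%:~R) // ler_int.
- have [->|kn0] := eqVneq k 0; [left | right]; first by rewrite normr0.
  by rewrite ler1z; lia.
- have [kn|kn] := lerP `|k| n%:Z; [left | right]; first by rewrite -(ler_int R) in kn.
  have kn1 : n%:Z + 1 <= `|k| by lia.
  by rewrite -(ler_int R) intrD in kn1.
Qed.

Lemma addr_scaled_gt0 (R : realFieldType) (c d M N : R) :
  0 <= M <= N -> 0 < c -> 0 <= c + (N + 1) * d -> 0 < c + M * d.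
Proof.
move=> /andP[M_ge0 MN] c_gt0 cd_ge0; have [d_ge0|d_lt0] := lerP 0 d; first nra.
have : N * d <= M * d by rewrite ler_wnM2r // ltW.
nra.
Qed.

Section UniformGramMinimum.
Variables (R : realType) (n : nat) (B : 'M[R]_n) (c d : R).
Hypothesis gramB : uniform_gram B c d.

Lemma uniform_gram_norm2_lb x :
  0 < c -> 0 <= c + (n%:R + 1) * d -> d <= c ->
  lattice B x -> x != 0 -> Num.sqrt (c + d) <= norm2 x.
Proof.
move=> c_gt0 cd_ge0 d_le_c [z ->] xn0.
have [i0 zi0] : exists i0, z i0 != 0.
  apply/existsP; apply: contraNT xn0; rewrite negb_exists => /forallP zn0.
  by apply/eqP/big1 => i _; move: (zn0 i); rewrite negbK => /eqP ->; rewrite scale0r.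
rewrite /norm2 ler_sqrt ?dotv_ge0 // (dotv_comb_uniform_gram gramB).
exact: uniform_form_int_lb zi0.
Qed.

Lemma lambda1_uniform_gram :
  (0 < n)%N -> 0 < c -> 0 <= c + (n%:R + 1) * d -> d <= c ->
  lambda1 B = Num.sqrt (c + d).
Proof.
move=> n_gt0 c_gt0 cd_ge0 d_le_c.
have n_ge1 : 1 <= n%:R :> R by rewrite ler1n.
have cd_gt0 : 0 < c + d by rewrite -[d]mul1r; apply: addr_scaled_gt0 cd_ge0 => //; lra.
pose i0 : 'I_n := Ordinal n_gt0.
have norm_row : norm2 (row i0 B) = Num.sqrt (c + d) by rewrite /norm2 gramB eqxx mulr1.
have row_mem : (lattice B `\ 0)%classic (row i0 B).
  split.
    exists (fun j => (j == i0)%:R); rewrite (bigD1 i0) //= big1 ?addr0.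
      by rewrite scale1r.
    by move=> j /negbTE ->; rewrite scale0r.
  move=> /= row0; move: cd_gt0; rewrite -sqrtr_gt0 -norm_row row0.
  by rewrite /norm2 /dotv big1 ?sqrtr0 ?ltxx // => j _; rewrite mxE mul0r.
have lb (y : R) : [set norm2 x | x in lattice B `\ 0]%classic y ->
    Num.sqrt (c + d) <= y.
  by move=> [x [Lx xn0] <-]; apply: uniform_gram_norm2_lb Lx _ => //; apply/eqP.
rewrite /lambda1; apply/eqP; rewrite eq_le; apply/andP; split.
  by rewrite -norm_row; apply: ge_inf; [exists (Num.sqrt (c + d)) | exists (row i0 B)].
by apply: lb_le_inf; [exists (norm2 (row i0 B)); exists (row i0 B) | ].
Qed.

End UniformGramMinimum.

Lemma bernoulli_ineq (R : realFieldType) (u : R) (n : nat) :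
  -1 <= u -> 1 + n%:R * u <= (1 + u) ^+ n.
Proof.
move=> hu; elim: n => [|n IH]; first by rewrite mul0r addr0 expr0.
rewrite exprS; apply: le_trans (ler_wpM2l _ IH); last by lra.
have : 0 <= n%:R * u ^+ 2 by rewrite mulr_ge0 ?sqr_ge0.
rewrite -natr1; nra.
Qed.

Lemma bernoulli_ineq2 (R : realFieldType) (t : R) (n : nat) : 0 <= t ->
  2 + 2 * n%:R * t + n%:R * (n%:R - 1) * t ^+ 2 <= 2 * (1 + t) ^+ n.
Proof.
move=> ht; elim: n => [|n IH]; first by rewrite expr0 !(mulr0, mul0r, addr0, mulr1).
rewrite [in X in _ <= X]exprS [X in _ <= X]mulrCA.
apply: le_trans (ler_wpM2l _ IH); last by lra.
have nn1 : 0 <= n%:R * (n%:R - 1) :> R.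
  by case: n {IH} => [|n]; rewrite ?mul0r // mulr_ge0 // subr_ge0 ler1n.
have : 0 <= n%:R * (n%:R - 1) * t ^+ 2 * t.
  by apply: mulr_ge0 => //; apply: mulr_ge0 => //; apply: sqr_ge0.
rewrite -natr1; nra.
Qed.

Lemma poly_le_exp2 (n : nat) : (2 <= n)%N ->
  (2 * n * (n + 1) ^ 2 <= 2 ^ n * (5 * n - 1))%N.
Proof.
have step k : (4 <= k)%N -> (2 * k * (k + 1) ^ 2 <= 2 ^ k * (5 * k - 1))%N.
  elim: k => [//|k IH] hk.
  have [hk3|hk3] := leqP k 3; first by have -> : k = 3%N by lia.
  have H := IH hk3.
  have h1 : (2 * k.+1 * (k.+1 + 1) ^ 2 <= 2 * (2 * k * (k + 1) ^ 2))%N.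
    by rewrite !expnS !expn0; nia.
  apply: leq_trans h1 _.
  rewrite [(2 ^ k.+1)%N]expnS -[X in (_ <= X)%N]mulnA leq_mul2l /=.
  by apply: leq_trans H _; rewrite leq_mul2l; apply/orP; right; lia.
by case: n => [//|[//|[|[|n]]]] _ //; apply: step.
Qed.

(* [(1 + 1/n)^n >= (5n - 1)/(2n)], the binomial expansion cut after the
   quadratic term, is enough here. *)
Lemma chord_endpoint_ineq (R : realFieldType) (n : nat) : (2 <= n)%N ->
  (n%:R + 1) ^+ 2 <= 2 ^+ n * (1 + (n%:R : R)^-1) ^+ n.
Proof.
move=> n2; set N : R := n%:R.
have N2 : 2 <= N by rewrite /N ler_nat.
have Ninv_ge0 : 0 <= N^-1 by rewrite invr_ge0; lra.
have := bernoulli_ineq2 n Ninv_ge0.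
have -> : 2 + 2 * N * N^-1 + N * (N - 1) * N^-1 ^+ 2 = (5 * N - 1) / (2 * N) * 2.
  by field; lra.
rewrite [X in _ <= X -> _]mulrC ler_pM2r // => Hbin.
have hR : 2 * N * (N + 1) ^+ 2 <= 2 ^+ n * (5 * N - 1).
  have := poly_le_exp2 n2; rewrite -(ler_nat R) !natrM !natrX natrD natrB; last by lia.
  by rewrite natrM.
apply: le_trans (ler_wpM2l (exprn_ge0 _ (ler0n _ 2)) Hbin).
rewrite mulrA ler_pdivlMr; last by lra.
by rewrite mulrC.
Qed.

(* [2^n (1 + n (x - 1)) - (n + 1) x^n = (2 - x) Q x] with [Q] nondecreasing
   on [x >= 0], so the sign is settled by the endpoint [x = n / (n + 1)]. *)
Lemma chord_ineq (R : realFieldType) (n : nat) (u : R) : (2 <= n)%N ->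
  0 <= 1 + (n%:R + 1) * u -> u <= 1 ->
  (n%:R + 1) * (1 + u) ^+ n <= 2 ^+ n * (1 + n%:R * u).
Proof.
move=> n2 hu1 hu2; set N : R := n%:R.
have N2 : 2 <= N by rewrite /N ler_nat.
set Q := fun x : R => (N + 1) * (\sum_(i < n) x ^+ (n.-1 - i) * 2 ^+ i) - N * 2 ^+ n.
have factor x : 2 ^+ n * (1 + N * (x - 1)) - (N + 1) * x ^+ n = (2 - x) * Q x.
  have := subrXX x 2 n; rewrite /Q => H.
  have -> : (N + 1) * x ^+ n = (N + 1) * (x ^+ n - 2 ^+ n) + (N + 1) * 2 ^+ n by ring.
  by rewrite H; ring.
set w := 1 + u; set w0 := N / (N + 1).
have w0_le : w0 <= w by rewrite /w0 /w ler_pdivrMr; [nra | lra].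
have w0_ge0 : 0 <= w0 by rewrite /w0 divr_ge0 //; lra.
have Q_mono : Q w0 <= Q w.
  rewrite /Q lerD2r ler_pM2l; last by lra.
  apply: ler_sum => i _; apply: ler_wpM2r; first exact: exprn_ge0.
  by apply: lerXn2r => //; rewrite nnegrE //; lra.
have Q_w0 : 0 <= Q w0.
  have : 0 <= 2 ^+ n * (1 + N * (w0 - 1)) - (N + 1) * w0 ^+ n.
    have e1 : 1 + N * (w0 - 1) = (N + 1)^-1 by rewrite /w0; field; lra.
    have e2 : w0 ^+ n * (1 + N^-1) ^+ n = 1.
      by rewrite -exprMn /w0 (_ : _ * _ = 1) ?expr1n //; field; lra.
    rewrite e1 subr_ge0 ler_pdivlMr; last by lra.
    have := ler_wpM2l (exprn_ge0 n w0_ge0) (chord_endpoint_ineq R n2).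
    rewrite -/N [X in _ <= X -> _]mulrCA e2 mulr1 => endpoint.
    by rewrite -mulrA (mulrC (w0 ^+ n)) mulrA -expr2 mulrC.
  by rewrite factor pmulr_rge0 // /w0 subr_gt0 ltr_pdivrMr; lra.
have : 0 <= (2 - w) * Q w by apply: mulr_ge0; [rewrite /w; lra | lra].
by rewrite -factor subr_ge0 /w (addrC 1 u) addrK.
Qed.

Section UniformGramDensity.
Variables (R : realType) (n : nat) (B : 'M[R]_n) (c d : R).
Hypothesis gramB : uniform_gram B c d.

Lemma sqr_center_density_uniform_gram :
  (0 < n)%N -> 0 < c -> 0 <= c + (n%:R + 1) * d -> d <= c ->
  center_density B ^+ 2 =
    (1 / 2 ^+ n) ^+ 2 * ((1 + d / c) ^+ n / (1 + n%:R * (d / c))).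
Proof.
move=> n_gt0 c_gt0 hd1 hd2.
have n_ge1 : 1 <= n%:R :> R by rewrite ler1n.
have cd_gt0 : 0 < c + d by rewrite -[d]mul1r; apply: addr_scaled_gt0 hd1 => //; lra.
have cnd_gt0 : 0 < c + n%:R * d by apply: addr_scaled_gt0 hd1 => //; lra.
have sqr_P : (Num.sqrt (c + d) ^+ n) ^+ 2 = (c * (1 + d / c)) ^+ n.
  by rewrite -exprM mulnC exprM sqr_sqrtr ?ltW //; congr (_ ^+ _); field; lra.
have sqr_D : `|\det B| ^+ 2 = c ^+ n * (1 + n%:R * (d / c)).
  by rewrite real_normK ?num_real // (det_uniform_gram gramB) // gt_eqF.
have : 0 < 1 + n%:R * (d / c).
  by rewrite (_ : 1 + _ = (c + n%:R * d) / c) ?divr_gt0 //; field; lra.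
rewrite /center_density /covol (lambda1_uniform_gram gramB) // expr_div_n exprMn.
rewrite sqr_P sqr_D exprMn => u_pos; field.
by rewrite !expf_neq0 ?gt_eqF //; lra.
Qed.

Lemma center_density_uniform_gram_bounds :
  (2 <= n)%N -> 0 < c -> 0 <= c + (n%:R + 1) * d -> d <= c ->
  [/\ 1 / 2 ^+ n <= center_density B,
      center_density B <= 1 / (Num.sqrt 2 ^+ n * Num.sqrt (n%:R + 1)),
      d = 0 -> center_density B = 1 / 2 ^+ n &
      d = c -> center_density B = 1 / (Num.sqrt 2 ^+ n * Num.sqrt (n%:R + 1))].
Proof.
move=> n2 c_gt0 hd1 hd2.
have := sqr_center_density_uniform_gram (ltnW n2) c_gt0 hd1 hd2.
have delta_ge0 : 0 <= center_density B.
  rewrite /center_density (lambda1_uniform_gram gramB) ?(ltnW n2) //.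
  by rewrite divr_ge0 ?mulr_ge0 ?exprn_ge0 ?sqrtr_ge0 ?normr_ge0.
set delta := center_density B; set u := d / c => sqr_delta.
set lo := 1 / 2 ^+ n; set hi := 1 / (Num.sqrt 2 ^+ n * Num.sqrt (n%:R + 1)).
have N2 : 2 <= n%:R :> R by rewrite ler_nat.
have two_n_gt0 : 0 < 2 ^+ n :> R by rewrite exprn_gt0.
have lo_ge0 : 0 <= lo by rewrite divr_ge0 ?ltW.
have hi_ge0 : 0 <= hi by rewrite divr_ge0 ?mulr_ge0 ?exprn_ge0 ?sqrtr_ge0.
have sqr_hi : hi ^+ 2 = lo ^+ 2 * (2 ^+ n / (n%:R + 1)).
  rewrite !expr_div_n exprMn -exprM mulnC exprM !sqr_sqrtr ?ler0n //; last lra.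
  by field; rewrite expf_neq0 ?gt_eqF //=; lra.
have u_ge : 0 <= 1 + (n%:R + 1) * u.
  have -> : 1 + (n%:R + 1) * u = (c + (n%:R + 1) * d) / c by rewrite /u; field; lra.
  exact: divr_ge0 hd1 (ltW c_gt0).
have u_le : u <= 1 by rewrite /u ler_pdivrMr // mul1r.
have un_gt0 : 0 < 1 + n%:R * u by apply: addr_scaled_gt0 u_ge => //; lra.
have le_sqr x y : 0 <= x -> 0 <= y -> x ^+ 2 <= y ^+ 2 -> x <= y.
  by move=> x_ge0 y_ge0; rewrite ler_sqr.
have eq_sqr x y : 0 <= x -> 0 <= y -> x ^+ 2 = y ^+ 2 -> x = y.
  by move=> x_ge0 y_ge0 /eqP; rewrite eqrXn2 // => /eqP.
split.
- apply: le_sqr => //; rewrite sqr_delta ler_peMr ?sqr_ge0 //.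
  by rewrite ler_pdivlMr // mul1r bernoulli_ineq //; nra.
- apply: le_sqr => //; rewrite sqr_delta sqr_hi ler_wpM2l ?sqr_ge0 //.
  rewrite ler_pdivrMr // mulrAC ler_pdivlMr; last lra.
  by rewrite mulrC chord_ineq.
- move=> d0; apply: eq_sqr => //; rewrite sqr_delta /u d0 mul0r mulr0 addr0.
  by rewrite expr1n divr1 mulr1.
- move=> dc; apply: eq_sqr => //; rewrite sqr_delta sqr_hi /u dc divff ?gt_eqF //.
  by rewrite mulr1 (_ : 1 + 1 = 2 :> R) // addrC.
Qed.

End UniformGramDensity.

Section TameLattice.
Variables (R : realType) (n : nat) (E : 'M[R]_n) (a h : R).
Hypothesis tameE : tame_basis E a h.

Lemma tame_uniform_gram : uniform_gram E (a + h) (- h).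
Proof.
case: tameE => _ _ _ Ha Hh i j; case: eqVneq => [<-|/Hh ->].
  by rewrite Ha mulr1 addrK.
by rewrite mulr0 add0r.
Qed.

Lemma tame_param : (0 < n)%N -> a + h - n%:R * h = 1.
Proof.
move=> n_gt0; case: tameE => _ _ H1 _ _; rewrite -[RHS](H1 (Ordinal n_gt0)).
by rewrite /vsum (dotv_row_sum_uniform_gram tame_uniform_gram) mulrN.
Qed.

Lemma tame_gap_gt0 : (2 <= n)%N -> 0 < a + h.
Proof.
by case: tameE => -[E_unit _] _ _ _ _; exact: uniform_gram_gt0 tame_uniform_gram E_unit.
Qed.

Lemma dotv_vsum_tame : dotv (vsum E) (vsum E) = n%:R.
Proof.
case: tameE => _ _ H1 _ _; rewrite {1}/vsum dotv_suml.
by under eq_bigr do rewrite H1; rewrite sumr_const card_ord.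
Qed.

Lemma row_image_basis r s i :
  row i (image_basis E r s) = r%:~R *: row i E + s%:~R *: vsum E.
Proof.
case: tameE => _ _ H1 _ _.
rewrite /image_basis /transf row_mul mulmxDr mul_mx_scalar -scalemxAr mulmxA.
congr (_ + _ *: _); rewrite [row i E *m _]mx11_scalar.
have -> : (row i E *m (vsum E)^T) 0 0 = 1.
  by rewrite -(H1 i) /dotv mxE; apply: eq_bigr => k _; rewrite [_^T _ _]mxE.
by rewrite mul_scalar_mx scale1r.
Qed.

Lemma image_uniform_gram r s :
  uniform_gram (image_basis E r s) (r%:~R ^+ 2 * (a + h))
    (2 * r%:~R * s%:~R + s%:~R ^+ 2 * n%:R - r%:~R ^+ 2 * h).
Proof.
move=> i j; have H1 : forall k, dotv (row k E) (vsum E) = 1 by case: tameE.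
rewrite !row_image_basis !dotvDl !dotvZl !dotvDr !dotvZr.
rewrite (dotvC (vsum E) (row j E)) tame_uniform_gram !H1 dotv_vsum_tame.
ring.
Qed.

End TameLattice.

Lemma tame_ratio_thresholds (R : realFieldType) (N a h : R) :
  1 < N -> a + h - N * h = 1 ->
  [/\ (N * a - 1) / (N ^+ 2 - 1) = (a + h) / (N + 1),
      (N * a - 1) / (N - 1) = a + h &
      (N * a - 1) * (N + 1) / (N - 1) = (a + h) * (N + 1)].
Proof.
move=> N_gt1 e; have -> : a = 1 + N * h - h by lra.
have N2 : N ^+ 2 - 1 != 0 by rewrite subr_eq0 sqrf_eq1 negb_or !gt_eqF //; lra.
by split; field; rewrite ?N2 //= !gt_eqF //; lra.
Qed.

Lemma ratio_uniform_gram_param (R : realFieldType) (N A p d q : R) :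
  0 < N -> 0 < p -> q = A + N * d / p ->
  [/\ A / (N + 1) <= q -> 0 <= p * A + (N + 1) * d,
      q <= A * (N + 1) -> d <= p * A,
      q = A -> d = 0 &
      q = A * (N + 1) -> d = p * A].
Proof.
move=> N_gt0 p_gt0 eq_q.
have eq_d : d = p / N * (q - A) by rewrite eq_q; field; rewrite !gt_eqF.
have pN_gt0 : 0 < p / N by rewrite divr_gt0.
split => [q_ge|q_le|qA|qA].
- have -> : p * A + (N + 1) * d = p / N * ((N + 1) * q - A).
    by rewrite eq_d; field; rewrite gt_eqF.
  apply: mulr_ge0; first exact: ltW.
  by rewrite subr_ge0 -ler_pdivrMl; [rewrite mulrC | lra].
- rewrite eq_d (_ : p * A = p / N * (N * A)); last by field; rewrite gt_eqF.
  by apply: ler_wpM2l; [exact: ltW | lra].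
- by rewrite eq_d qA subrr mulr0.
- by rewrite eq_d qA; field; rewrite gt_eqF.
Qed.

Theorem mainTheorem5 (R : realType) (n : nat) (E : 'M[R]_n) (a h : R)
    (r s m : int) :
  (2 <= n)%N ->
  tame_basis E a h ->
  r != 0 -> (`|r| < n%:Z) ->
  m = r + s * n%:Z ->
  let q := (m%:~R / r%:~R) ^+ 2 : R in
  (n%:R * a - 1) / (n%:R ^+ 2 - 1) <= q <= (n%:R * a - 1) * (n%:R + 1) / (n%:R - 1) ->
  [/\ 1 / 2 ^+ n <= center_density (image_basis E r s),
      center_density (image_basis E r s)
        <= 1 / (Num.sqrt 2 ^+ n * Num.sqrt (n%:R + 1)),
      q = (n%:R * a - 1) / (n%:R - 1) ->
        center_density (image_basis E r s) = 1 / 2 ^+ n &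
      q = (n%:R * a - 1) * (n%:R + 1) / (n%:R - 1) ->
        center_density (image_basis E r s)
          = 1 / (Num.sqrt 2 ^+ n * Num.sqrt (n%:R + 1))].
Proof.
move=> n2 tameE r_neq0 _ -> q /andP[q_ge q_le].
have N_gt1 : 1 < n%:R :> R by rewrite ltr1n.
have param := tame_param tameE (ltnW n2).
have [thr_lo thr_mid thr_hi] := tame_ratio_thresholds N_gt1 param.
rewrite thr_lo thr_hi in q_ge q_le; rewrite thr_mid thr_hi.
have r2_gt0 : 0 < r%:~R ^+ 2 :> R by rewrite exprn_even_gt0 //= intr_eq0.
set d := 2 * r%:~R * s%:~R + s%:~R ^+ 2 * n%:R - r%:~R ^+ 2 * h.
have eq_q : q = (a + h) + n%:R * d / r%:~R ^+ 2.
  rewrite /q /d intrD intrM -[(n%:Z)%:~R]/(n%:R : R).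
  have -> : a = 1 + n%:R * h - h by lra.
  by field; rewrite intr_eq0.
have [hd1 hd2 d0 dc] :=
  ratio_uniform_gram_param (lt_trans ltr01 N_gt1) r2_gt0 eq_q.
have c_gt0 := mulr_gt0 r2_gt0 (tame_gap_gt0 tameE n2).
have [lo up lo_eq up_eq] := center_density_uniform_gram_bounds
  (image_uniform_gram tameE r s) n2 c_gt0 (hd1 q_ge) (hd2 q_le).
by split => // [/d0 | /dc].
Qed.
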